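(* Let $\xi>0$ and $\alpha\in\mathbb{R}$, and consider the planar vector field $f_0(y,z;\alpha)$ on $\mathbb{R}^2$ given by \[ \dot y = e^{z}-1,\qquad \dot z = \xi + e^{z}\left(\alpha z - \xi y - \xi\right). \] Then $f_0$ has a unique fixed point, namely $(y,z)=(0,0)$, and this fixed point undergoes a degenerate Hopf bifurcation at $\alpha=\xi$. In particular, for $\alpha=\xi$ the vector field is Hamiltonian (up to a positive factor) and can be written as \[ f_0(y,z;\xi)=g(y,z)\,J\,\nabla H(y,z), \] where \[ g(y,z)=\frac{e^{\xi y+z}}{\xi},\qquad H(y,z)=-e^{-\xi y}\left(\xi y-\xi z+\xi+1-\xi e^{-z}\right)+1,\qquad J=\begin{bmatrix}0&1\\-1&0\end{bmatrix}. \]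
   Context: This planar system is the reduced (slow) problem, restricted to the critical manifold $C_0=\{z=-x-\xi y\}$, of the dimensionless spring-block earthquake model $\dot x=-e^{z}(x+(1+\alpha)z)$, $\dot y=e^{z}-1$, $\varepsilon\dot z=-e^{-z}(y+(x+z)/\xi)$ with $\varepsilon=0$. *)

From Stdlib Require Import Reals Lra.
From Coquelicot Require Import Coquelicot.
Open Scope R_scope.

Definition f0y (xi alpha y z : R) : R := exp z - 1.
Definition f0z (xi alpha y z : R) : R :=
  xi + exp z * (alpha * z - xi * y - xi).

Definition is_fixed_point (xi alpha y z : R) : Prop :=
  f0y xi alpha y z = 0 /\ f0z xi alpha y z = 0.

Definition jac11 xi alpha y0 z0 := Derive (fun y => f0y xi alpha y z0) y0.
Definition jac12 xi alpha y0 z0 := Derive (fun z => f0y xi alpha y0 z) z0.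
Definition jac21 xi alpha y0 z0 := Derive (fun y => f0z xi alpha y z0) y0.
Definition jac22 xi alpha y0 z0 := Derive (fun z => f0z xi alpha y0 z) z0.

Definition jac_trace xi alpha y0 z0 :=
  jac11 xi alpha y0 z0 + jac22 xi alpha y0 z0.
Definition jac_det xi alpha y0 z0 :=
  jac11 xi alpha y0 z0 * jac22 xi alpha y0 z0
  - jac12 xi alpha y0 z0 * jac21 xi alpha y0 z0.

(* Hopf bifurcation of the fixed point (y0,z0) (a fixed point for all alpha)
   at alpha = a0: at a0 the Jacobian has a pair of purely imaginary
   eigenvalues +/- i w, w > 0 (for a real 2x2 matrix: trace 0, det > 0), and
   the real part of the eigenvalue pair, trace/2, crosses zero with nonzero
   speed (transversality). *)
Definition hopf_point (xi a0 y0 z0 : R) : Prop :=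
  (forall alpha, is_fixed_point xi alpha y0 z0) /\
  jac_trace xi a0 y0 z0 = 0 /\
  jac_det xi a0 y0 z0 > 0 /\
  exists d, is_derive (fun alpha => jac_trace xi alpha y0 z0 / 2) a0 d /\ d <> 0.

Definition gfac (xi y z : R) : R := exp (xi * y + z) / xi.
Definition Ham (xi y z : R) : R :=
  - exp (- xi * y) * (xi * y - xi * z + xi + 1 - xi * exp (- z)) + 1.

(* f_0(.,.;alpha) = g J grad H with J = [[0,1],[-1,0]], i.e.
   (f0y, f0z) = g * (dH/dz, - dH/dy), with g > 0. *)
Definition hamiltonian_form (xi alpha : R) (g H : R -> R -> R) : Prop :=
  forall y z, g y z > 0 /\
    exists Hy Hz,
      is_derive (fun t => H t z) y Hy /\
      is_derive (fun t => H y t) z Hz /\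
      f0y xi alpha y z = g y z * Hz /\
      f0z xi alpha y z = g y z * (- Hy).

(** At [alpha = xi] the linearisation at the origin is [[0, 1], [-xi, 0]]:
    trace [alpha - xi] vanishes with speed one while the determinant is [xi > 0].
    For the Hamiltonian form, [g] times the [exp (- xi y)] prefactor of the partial
    derivatives of [H] leaves only [exp z], and [exp z * exp (- z) = 1] turns
    [g (H_z, - H_y)] back into [f_0]. *)
From Stdlib Require Import Reals Lra.
From Coquelicot Require Import Coquelicot.
Open Scope R_scope.

Lemma is_fixed_point_origin xi alpha : is_fixed_point xi alpha 0 0.
Proof. unfold is_fixed_point, f0y, f0z; rewrite exp_0; split; ring. Qed.

Lemma is_fixed_pointP xi alpha y z :
  xi <> 0 -> is_fixed_point xi alpha y z <-> y = 0 /\ z = 0.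
Proof.
  intros xi_neq0; split.
  - unfold is_fixed_point, f0y, f0z; intros [f0y_eq0 f0z_eq0].
    assert (z_eq0 : z = 0) by (apply exp_inv; rewrite exp_0; lra).
    subst z; rewrite exp_0 in f0z_eq0.
    split; [|reflexivity].
    apply (Rmult_eq_reg_l xi); [lra | exact xi_neq0].
  - intros [-> ->]; apply is_fixed_point_origin.
Qed.

Lemma jac11_origin xi alpha : jac11 xi alpha 0 0 = 0.
Proof. unfold jac11, f0y; apply is_derive_unique; auto_derive; auto; lra. Qed.

Lemma jac12_origin xi alpha : jac12 xi alpha 0 0 = 1.
Proof.
  unfold jac12, f0y; apply is_derive_unique; auto_derive; auto.
  rewrite exp_0; lra.
Qed.

Lemma jac21_origin xi alpha : jac21 xi alpha 0 0 = - xi.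
Proof.
  unfold jac21, f0z; apply is_derive_unique; auto_derive; auto.
  rewrite exp_0; ring.
Qed.

Lemma jac22_origin xi alpha : jac22 xi alpha 0 0 = alpha - xi.
Proof.
  unfold jac22, f0z; apply is_derive_unique; auto_derive; auto.
  rewrite exp_0; ring.
Qed.

Lemma jac_trace_origin xi alpha : jac_trace xi alpha 0 0 = alpha - xi.
Proof. unfold jac_trace; rewrite jac11_origin, jac22_origin; ring. Qed.

Lemma jac_det_origin xi alpha : jac_det xi alpha 0 0 = xi.
Proof.
  unfold jac_det; rewrite jac11_origin, jac12_origin, jac21_origin; ring.
Qed.

Lemma hopf_point_origin xi : 0 < xi -> hopf_point xi xi 0 0.
Proof.
  intros xi_gt0; split; [|split; [|split]].
  - intros alpha; apply is_fixed_point_origin.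
  - rewrite jac_trace_origin; ring.
  - rewrite jac_det_origin; exact xi_gt0.
  - exists (1 / 2); split; [|lra].
    apply (is_derive_ext (fun alpha => (alpha - xi) / 2)).
    + intros alpha; rewrite jac_trace_origin; reflexivity.
    + auto_derive; auto; field.
Qed.

Lemma is_derive_Ham_y xi y z :
  is_derive (fun t => Ham xi t z) y
    (xi * exp (- xi * y) * (xi * y - xi * z + xi - xi * exp (- z))).
Proof. unfold Ham; auto_derive; auto; ring. Qed.

Lemma is_derive_Ham_z xi y z :
  is_derive (fun t => Ham xi y t) z (xi * exp (- xi * y) * (1 - exp (- z))).
Proof. unfold Ham; auto_derive; auto; ring. Qed.

Lemma gfac_mul_exp xi y z :
  xi <> 0 -> gfac xi y z * (xi * exp (- xi * y)) = exp z.
Proof.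
  intros xi_neq0; unfold gfac.
  rewrite exp_plus, Ropp_mult_distr_l_reverse, exp_Ropp.
  field; split; [apply Rgt_not_eq, exp_pos | exact xi_neq0].
Qed.

Lemma exp_mul_exp_opp x : exp x * exp (- x) = 1.
Proof. rewrite <- exp_plus, Rplus_opp_r; apply exp_0. Qed.

Lemma hamiltonian_form_Ham xi : 0 < xi -> hamiltonian_form xi xi (gfac xi) (Ham xi).
Proof.
  intros xi_gt0 y z; split.
  - apply Rdiv_lt_0_compat; [apply exp_pos | exact xi_gt0].
  - assert (g_exp : gfac xi y z * (xi * exp (- xi * y)) = exp z)
      by (apply gfac_mul_exp; lra).
    pose proof (exp_mul_exp_opp z) as exp_inv_z.
    eexists; eexists; split; [apply is_derive_Ham_y|].
    split; [apply is_derive_Ham_z|].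
    unfold f0y, f0z; split.
    + rewrite <- Rmult_assoc, g_exp; lra.
    + rewrite <- Ropp_mult_distr_r, <- Rmult_assoc, g_exp.
      replace xi with (xi * (exp z * exp (- z))) at 1 by (rewrite exp_inv_z; ring).
      ring.
Qed.

Theorem proposition1 (xi : R) (hxi : 0 < xi) :
  (forall alpha y z, is_fixed_point xi alpha y z <-> (y = 0 /\ z = 0)) /\
  hopf_point xi xi 0 0 /\
  hamiltonian_form xi xi (gfac xi) (Ham xi).
Proof.
  split; [|split].
  - intros alpha y z; apply is_fixed_pointP; lra.
  - apply hopf_point_origin; exact hxi.
  - apply hamiltonian_form_Ham; exact hxi.
Qed.
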